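(* Let $\mathbb P$ be an LTF. Then $\mathbb P\times_{E_0}\mathbb P$ forces that $x_{\mathrm{left}}$ and $x_{\mathrm{right}}$ are not $E_0$-equivalent, where $\langle x_{\mathrm{left}},x_{\mathrm{right}}\rangle$ is the generic pair of reals, i.e. the unique pair with $\langle x_{\mathrm{left}},x_{\mathrm{right}}\rangle\in[T]\times[T']$ for all $\langle T,T'\rangle$ in the generic filter.
   Context: Notation. $2^{<\omega}$ is the set of finite binary strings, $\mathrm{lh}(s)$ the length of $s$, $s\subseteq t$ means $t$ extends $s$. For $s\in 2^{<\omega}$ and $x\in 2^\omega$, $s\cdot x\in 2^\omega$ is given by $(s\cdot x)(k)=x(k)+s(k)\bmod 2$ for $k<\mathrm{lh}(s)$ and $(s\cdot x)(k)=x(k)$ otherwise. For strings $s,t$ with $\mathrm{lh}(s)\le\mathrm{lh}(t)$, $s\cdot t$ is the string of length $\mathrm{lh}(t)$ with $(s\cdot t)(k)=t(k)+s(k)\bmod 2$ for $k<\mathrm{lh}(s)$ and $(s\cdot t)(k)=t(k)$ otherwise; if $\mathrm{lh}(s)>\mathrm{lh}(t)$ then $s\cdot t=(s\restriction\mathrm{lh}(t))\cdot t$. For $T\subseteq 2^{<\omega}$, $s\cdot T=\{s\cdot t:t\in T\}$. For a tree $T$ and $s\in T$, $T\upharpoonright s=\{t\in T:s\subseteq t\lor t\subseteq s\}$. A perfect tree is a nonempty tree $T\subseteq 2^{<\omega}$ with no endpoints and no isolated branches; its stem $\mathrm{stem}(T)$ is the largest $s\in T$ with $T=T\upharpoonright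 s$; $[T]=\{a\in 2^\omega:\forall m\,(a\restriction m\in T)\}$. A perfect tree $T$ is large, written $T\in\mathbf{LT}$, if there are nonempty strings $q^i_n$ ($n<\omega$, $i=0,1$) with $\mathrm{lh}(q^0_n)=\mathrm{lh}(q^1_n)\ge1$ and $q^i_n(0)=i$, such that $T$ consists exactly of all initial segments of strings $r^\frown q^{i(0)}_0{}^\frown\cdots{}^\frown q^{i(n)}_n$, where $r=\mathrm{stem}(T)$, $n<\omega$, $i(0),\dots,i(n)\in\{0,1\}$. A large-tree forcing notion (LTF) is a set $\mathbb P\subseteq\mathbf{LT}$ such that $T\upharpoonright u\in\mathbb P$ whenever $u\in T\in\mathbb P$, and $s\cdot T\in\mathbb P$ whenever $T\in\mathbb P$ and $s\in 2^{<\omega}$. The conditional product $\mathbb P\times_{E_0}\mathbb P$ is the set of pairs $\langle T,T'\rangle$ of trees $T,T'\in\mathbb P$ such that $T'=s\cdot T$ for some $s\in 2^{<\omega}$, ordered componentwise by inclusion (smaller is stronger). $E_0$ is the equivalence relation on $2^\omega$: $x\,E_0\,y$ iff $x(n)=y(n)$ for all but finitely many $n$, equivalently $y=\sigma\cdot x$ for some $\sigma\in 2^{<\omega}$. *)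

From mathcomp Require Import all_boot.
Set Implicit Arguments. Unset Strict Implicit. Unset Printing Implicit Defensive.

Definition str := seq bool.
Definition real := nat -> bool.
Definition tree_t := str -> Prop.

Definition sub_str (s t : str) : Prop := prefix s t.

Definition sdot_real (s : str) (x : real) : real :=
  fun k => xorb (nth false s k) (x k).

(* s · t for strings: length lh(t); flips t(k) for k < min(lh s, lh t) *)
Definition sdot_str (s t : str) : str :=
  mkseq (fun k => xorb (nth false s k) (nth false t k)) (size t).

Definition sdot_tree (s : str) (T : tree_t) : tree_t :=
  fun u => exists t, T t /\ u = sdot_str s t.

Definition restrict (T : tree_t) (s : str) : tree_t :=
  fun t => T t /\ (sub_str s t \/ sub_str t s).

Definition is_tree (T : tree_t) : Prop :=
  (exists t, T t) /\ forall s t, T t -> sub_str s t -> T s.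

Definition perfect_tree (T : tree_t) : Prop :=
  is_tree T /\
  (forall t, T t -> exists u, T u /\ sub_str t u /\ size t < size u) /\
  (forall t, T t -> exists u v, T u /\ T v /\ sub_str t u /\ sub_str t v /\
                     ~ sub_str u v /\ ~ sub_str v u).

Definition same_tree (T T' : tree_t) : Prop := forall t, T t <-> T' t.

Definition is_stem (T : tree_t) (r : str) : Prop :=
  T r /\ same_tree T (restrict T r) /\
  forall s, T s -> same_tree T (restrict T s) -> sub_str s r.

Definition body (T : tree_t) : real -> Prop :=
  fun a => forall m, T (mkseq a m).

Definition large_tree (T : tree_t) : Prop :=
  perfect_tree T /\
  exists (r : str) (q : nat -> bool -> str),
    is_stem T r /\
    (forall n, size (q n false) = size (q n true) /\ 1 <= size (q n false)) /\
    (forall n (i : bool), nth false (q n i) 0 = i) /\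
    (forall t, T t <-> exists (n : nat) (i : nat -> bool),
        sub_str t (r ++ flatten [seq q k (i k) | k <- iota 0 n.+1])).

Definition LTF (P : tree_t -> Prop) : Prop :=
  (forall T, P T -> large_tree T) /\
  (forall T u, P T -> T u -> P (restrict T u)) /\
  (forall T s, P T -> P (sdot_tree s T)).

Definition cond_prod (P : tree_t -> Prop) (T T' : tree_t) : Prop :=
  P T /\ P T' /\ exists s, T' = sdot_tree s T.

Definition subtree (S T : tree_t) : Prop := forall t, S t -> T t.

Definition E0 (x y : real) : Prop := exists sigma : str, forall k, y k = sdot_real sigma x k.

From mathcomp Require Import all_boot.

Set Implicit Arguments.
Unset Strict Implicit.
Unset Printing Implicit Defensive.

(* A large tree T with stem r first splits into the blocks q_0(0) and q_0(1)
   of equal length; swapping them is a translation d with d(lh r) = 1 that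
   maps T onto itself.  Given a condition <T, s.T> and sigma, pick e among s and
   s + d with e(lh r) <> sigma(lh r), and let u = r ^ q_0(0).  Then
   <T|u, e.(T|u)> extends <T, s.T> because d.T = T.  All branches of T|u agree
   at lh r, while y in [e.(T|u)] means e.y in [T|u]; so y = sigma.x with x in
   [T|u] would force e(lh r) = sigma(lh r). *)

Definition xor_str (s d : str) : str :=
  mkseq (fun k => xorb (nth false s k) (nth false d k)) (maxn (size s) (size d)).

Lemma size_sdot_str d v : size (sdot_str d v) = size v.
Proof. by rewrite size_mkseq. Qed.

Lemma nth_sdot_str d v k : nth false (sdot_str d v) k =
  if k < size v then xorb (nth false d k) (nth false v k) else false.
Proof.
case: ltnP => hk; first by rewrite nth_mkseq.
by rewrite nth_default // size_sdot_str.
Qed.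

Lemma nth_xor_str s d k :
  nth false (xor_str s d) k = xorb (nth false s k) (nth false d k).
Proof.
case: (ltnP k (maxn (size s) (size d))) => hk; first by rewrite nth_mkseq.
move: hk; rewrite geq_max => /andP [hs hd].
by rewrite !nth_default ?size_mkseq ?geq_max ?hs ?hd.
Qed.

Lemma sdot_str_trivial d v :
  (forall k, k < size v -> nth false d k = false) -> sdot_str d v = v.
Proof.
move=> d0; apply: (@eq_from_nth _ false); rewrite ?size_sdot_str // => k hk.
by rewrite nth_sdot_str hk d0.
Qed.

Lemma sdot_strK d : involutive (sdot_str d).
Proof.
move=> v; apply: (@eq_from_nth _ false); rewrite ?size_sdot_str // => k hk.
by rewrite !nth_sdot_str size_sdot_str hk; case: (nth _ d k); case: (nth _ v k).
Qed.

Lemma sdot_strC a b : size a = size b -> sdot_str a b = sdot_str b a.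
Proof.
move=> eq_ab; apply: (@eq_from_nth _ false); rewrite ?size_sdot_str // => k hk.
by rewrite !nth_sdot_str eq_ab hk; case: (nth _ a k); case: (nth _ b k).
Qed.

Lemma sdot_str_swap a b : size a = size b -> sdot_str (sdot_str b a) a = b.
Proof.
move=> eq_ab; apply: (@eq_from_nth _ false); rewrite ?size_sdot_str // => k hk.
by rewrite !nth_sdot_str hk; case: (nth _ a k); case: (nth _ b k).
Qed.

Lemma sdot_str_xor s d v : sdot_str (xor_str s d) v = sdot_str s (sdot_str d v).
Proof.
apply: (@eq_from_nth _ false); rewrite ?size_sdot_str // => k hk.
rewrite !nth_sdot_str size_sdot_str hk nth_xor_str.
by case: (nth _ s k); case: (nth _ d k); case: (nth _ v k).
Qed.

Lemma sdot_str_cat d a b :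
  sdot_str d (a ++ b) = sdot_str d a ++ sdot_str (drop (size a) d) b.
Proof.
apply: (@eq_from_nth _ false).
  by rewrite !size_sdot_str !size_cat !size_sdot_str.
rewrite size_sdot_str size_cat => k hk.
rewrite nth_sdot_str size_cat hk !nth_cat size_sdot_str.
case: (ltnP k (size a)) => hka; first by rewrite nth_sdot_str hka.
by rewrite nth_sdot_str nth_drop subnKC // ltn_subLR // hk.
Qed.

Lemma sdot_str_prefix d v w : prefix v w -> prefix (sdot_str d v) (sdot_str d w).
Proof. by case/prefixP=> c ->; rewrite sdot_str_cat prefix_prefix. Qed.

Lemma sdot_str_mkseq d (y : real) m :
  sdot_str d (mkseq y m) = mkseq (sdot_real d y) m.
Proof.
apply: (@eq_from_nth _ false); rewrite ?size_sdot_str ?size_mkseq // => k hk.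
by rewrite nth_sdot_str size_mkseq hk !nth_mkseq.
Qed.

Lemma prefix_size_eq (A : eqType) (a b : seq A) : prefix a b -> size a = size b -> a = b.
Proof. by rewrite prefixE => /eqP ab eq_ab; rewrite -ab eq_ab take_size. Qed.

Lemma body_sdot_tree d S y : body (sdot_tree d S) y -> body S (sdot_real d y).
Proof.
move=> Sy m; have [t [St ymt]] := Sy m.
by rewrite -sdot_str_mkseq ymt sdot_strK.
Qed.

Lemma body_restrict_nth T u x k :
  k < size u -> body (restrict T u) x -> x k = nth false u k.
Proof.
move=> hk /(_ (size u)) [_ cmp].
have xu : mkseq x (size u) = u.
  by case: cmp => [/prefix_size_eq <-|/prefix_size_eq ->]; rewrite ?size_mkseq.
by rewrite -xu nth_mkseq.
Qed.

Section FirstSplitting.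

Variables (T : tree_t) (r : str) (q : nat -> bool -> str).
Hypothesis q_size :
  forall n, size (q n false) = size (q n true) /\ 1 <= size (q n false).
Hypothesis T_branches : forall t, T t <-> exists (n : nat) (i : nat -> bool),
  sub_str t (r ++ flatten [seq q k (i k) | k <- iota 0 n.+1]).

Definition first_split_flip : str :=
  nseq (size r) false ++ sdot_str (q 0 true) (q 0 false).

Lemma first_split_flip_branch b R :
  sdot_str first_split_flip (r ++ q 0 b ++ R) = r ++ q 0 (~~ b) ++ R.
Proof.
have [eq_q0 _] := q_size 0.
have size_q0 c : size (q 0 c) = size (q 0 false) by case: c.
have flip_q0 : sdot_str (sdot_str (q 0 true) (q 0 false)) (q 0 b) = q 0 (~~ b).
  case: b; last exact: sdot_str_swap.
  by rewrite sdot_strC ?sdot_strK // size_sdot_str.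
rewrite sdot_str_cat drop_size_cat ?size_nseq // sdot_str_cat flip_q0.
rewrite drop_oversize ?size_sdot_str ?size_q0 //.
rewrite !sdot_str_trivial // => k hk; first by rewrite nth_nil.
by rewrite nth_cat size_nseq hk nth_nseq hk.
Qed.

Lemma first_split_flip_tree v : T v -> T (sdot_str first_split_flip v).
Proof.
case/T_branches=> n [i v_branch].
apply/T_branches; exists n, (fun k => if k == 0 then ~~ i 0 else i k).
have tail_eq : [seq q k (if k == 0 then ~~ i 0 else i k) | k <- iota 1 n] =
               [seq q k (i k) | k <- iota 1 n].
  by apply/eq_in_map => k; rewrite mem_iota; case: k.
rewrite /= tail_eq -first_split_flip_branch.
exact: sdot_str_prefix.
Qed.

End FirstSplitting.

Lemma large_tree_flip T : large_tree T ->
  exists u d p, [/\ T u, p < size u, nth false d p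
                   & forall v, T v -> T (sdot_str d v)].
Proof.
case=> _ [r [q [_ [q_size [q_head T_branches]]]]].
have [_ q0_pos] := q_size 0.
exists (r ++ q 0 false), (first_split_flip r q), (size r); split.
- apply/T_branches; exists 0, (fun=> false).
  by rewrite /= cats0 /sub_str prefix_refl.
- by rewrite size_cat -addn1 leq_add2l.
- by rewrite nth_cat size_nseq ltnn subnn nth_sdot_str q0_pos !q_head.
- exact: first_split_flip_tree.
Qed.

Lemma translate_avoiding (T : tree_t) s d sigma p :
  nth false d p -> (forall v, T v -> T (sdot_str d v)) ->
  exists e, nth false e p != nth false sigma p /\
    forall S, subtree S T -> subtree (sdot_tree e S) (sdot_tree s T).
Proof.
move=> dp Td; case: (boolP (nth false s p != nth false sigma p)) => s_sigma.
  by exists s; split=> // S ST _ [v [Sv ->]]; exists v; split; first exact: ST.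
exists (xor_str s d); split.
  by rewrite nth_xor_str dp; move: s_sigma; case: (nth _ s p); case: (nth _ sigma p).
move=> S ST _ [v [Sv ->]]; exists (sdot_str d v).
by rewrite sdot_str_xor; split; first exact/Td/ST.
Qed.

Lemma no_translated_pair S e sigma p x y :
  (forall x z, body S x -> body S z -> x p = z p) ->
  nth false e p != nth false sigma p ->
  body S x -> body (sdot_tree e S) y -> ~ (forall k, y k = sdot_real sigma x k).
Proof.
move=> S_p e_sigma Sx /body_sdot_tree Sey yx.
have := S_p _ _ Sx Sey; rewrite /sdot_real yx /sdot_real.
by move: e_sigma; case: (nth _ e p); case: (nth _ sigma p); case: (x p).
Qed.

Theorem corollary5p4 (P : tree_t -> Prop) (HP : LTF P) :
  forall (T T' : tree_t), cond_prod P T T' ->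
  forall sigma : str,
  exists (S S' : tree_t),
    cond_prod P S S' /\ subtree S T /\ subtree S' T' /\
    forall x y : real, body S x -> body S' y -> ~ (forall k, y k = sdot_real sigma x k).
Proof.
move=> T _ [PT [_ [s ->]]] sigma.
have [P_large [P_restrict P_sdot]] := HP.
have [u [d [p [Tu p_u dp Td]]]] := large_tree_flip (P_large T PT).
have [e [e_sigma e_sub]] := translate_avoiding s sigma dp Td.
have PTu : P (restrict T u) by exact: P_restrict.
exists (restrict T u), (sdot_tree e (restrict T u)).
split; first by split; [|split; [exact: P_sdot | exists e]].
split; first by move=> t [].
split; first by apply: e_sub => t [].
move=> x y; apply: no_translated_pair e_sigma => x' z' Sx' Sz'.
by rewrite (body_restrict_nth p_u Sx') (body_restrict_nth p_u Sz').
Qed.
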